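(* Let $(X,f)$ be a dynamical system and let $S\subset X$ be a syndetically scrambled set for $f$ with $f(S)\subset S$ which contains a Cantor set $K$. Suppose that for every nonempty open $U\subset X$ there is $n\in\mathbb N$ with $f^n(K)\subset f^n(U)$. Then $f$ has a dense Mycielski set $T$ with $f(T)\subset T$ which is syndetically scrambled for $f$. Moreover, if $S$ is syndetically $\varepsilon$-scrambled, then so is $T$.
   Context: Dynamical system: compact metric space $X$ with metric $d$ and continuous $f$. Syndetic: subset of $\mathbb N$ meeting every set with arbitrarily long runs of consecutive integers. $\mathrm{Asy}(f)=\{(x,y):d(f^nx,f^ny)\to0\}$, $\mathrm{SProx}(f)=\{(x,y):\{n:d(f^nx,f^ny)<\eta\}$ syndetic for all $\eta>0\}$. A syndetically scrambled set has at least two points and all distinct pairs in $\mathrm{SProx}(f)\setminus\mathrm{Asy}(f)$; syndetically $\varepsilon$-scrambled if also $\limsup_n d(f^nx,f^ny)\ge\varepsilon$ for all distinct pairs. Cantor set: nonempty compact perfect totally disconnected; Mycielski set: countable union of Cantor sets. *)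

From Stdlib Require Import Reals Lra List.
Open Scope R_scope.

Section Dyn.
Context {X : Type} (d : X -> X -> R).

Definition is_metric : Prop :=
  (forall x y, 0 <= d x y) /\ (forall x y, d x y = 0 <-> x = y) /\
  (forall x y, d x y = d y x) /\ (forall x y z, d x z <= d x y + d y z).

Definition m_open (U : X -> Prop) : Prop :=
  forall x, U x -> exists r, 0 < r /\ forall y, d x y < r -> U y.

Definition m_compact (A : X -> Prop) : Prop :=
  forall (I : Type) (U : I -> X -> Prop),
    (forall i, m_open (U i)) ->
    (forall x, A x -> exists i, U i x) ->
    exists l : list I, forall x, A x -> exists i, In i l /\ U i x.

Definition compact_space : Prop := m_compact (fun _ => True).

Definition continuous_map (f : X -> X) : Prop :=
  forall x eps, 0 < eps -> exists delta, 0 < delta /\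
    forall y, d x y < delta -> d (f x) (f y) < eps.

Definition m_connected (C : X -> Prop) : Prop :=
  ~ exists U V, m_open U /\ m_open V /\
      (forall x, C x -> U x \/ V x) /\
      (exists x, C x /\ U x) /\ (exists x, C x /\ V x) /\
      (forall x, C x -> U x -> V x -> False).

Definition totally_disconnected (K : X -> Prop) : Prop :=
  forall C, (forall x, C x -> K x) -> m_connected C ->
    forall x y, C x -> C y -> x = y.

Definition m_closed (K : X -> Prop) : Prop := m_open (fun x => ~ K x).

Definition perfect_set (K : X -> Prop) : Prop :=
  m_closed K /\
  forall x, K x -> forall eps, 0 < eps -> exists y, K y /\ y <> x /\ d x y < eps.

Definition cantor_set (K : X -> Prop) : Prop :=
  (exists x, K x) /\ m_compact K /\ perfect_set K /\ totally_disconnected K.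

Definition mycielski_set (T : X -> Prop) : Prop :=
  exists C : nat -> X -> Prop, (forall n, cantor_set (C n)) /\
    forall x, T x <-> exists n, C n x.

Definition m_dense (T : X -> Prop) : Prop :=
  forall U, m_open U -> (exists x, U x) -> exists t, T t /\ U t.

Definition thick (B : nat -> Prop) : Prop :=
  forall L, exists m, forall i, (i < L)%nat -> B (m + i)%nat.

Definition syndetic (A : nat -> Prop) : Prop :=
  forall B, thick B -> exists n, A n /\ B n.

Definition asymptotic (f : X -> X) (x y : X) : Prop :=
  Un_cv (fun n => d (Nat.iter n f x) (Nat.iter n f y)) 0.

Definition synd_proximal (f : X -> X) (x y : X) : Prop :=
  forall eta, 0 < eta -> syndetic (fun n => d (Nat.iter n f x) (Nat.iter n f y) < eta).

Definition synd_scrambled (f : X -> X) (S : X -> Prop) : Prop :=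
  (exists x y, S x /\ S y /\ x <> y) /\
  forall x y, S x -> S y -> x <> y ->
    synd_proximal f x y /\ ~ asymptotic f x y.

Definition limsup_ge (f : X -> X) (eps : R) (x y : X) : Prop :=
  forall delta, 0 < delta -> forall N, exists n, (N <= n)%nat /\
    eps - delta < d (Nat.iter n f x) (Nat.iter n f y).

Definition synd_eps_scrambled (f : X -> X) (eps : R) (S : X -> Prop) : Prop :=
  synd_scrambled f S /\
  forall x y, S x -> S y -> x <> y -> limsup_ge f eps x y.

End Dyn.

From Stdlib Require Import Reals Lra Lia List Arith Classical ClassicalEpsilon.
From Stdlib Require Cantor.
Open Scope R_scope.

(* A "Cantor-like" set (nonempty, closed, without isolated points,
      and split by disjoint closed pieces between any two of its points) is a Cantor set, and
      the limit of a Cantor scheme (nested closed pieces indexed by binary words, disjoint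
      siblings, shrinking diameters) is Cantor-like.
   2. On an invariant scrambled set f is injective, and two distinct points have no common period.
   3. Independent family: inside K there are disjoint Cantor sets C k such that no point of any
      C k is a positive iterate of a point of any C j (limits of a Cantor scheme whose level-n
      balls are shrunk to avoid each other's first n iterates).
   4. Lifting: for a ball B and the time n given by the hypothesis, there is a Cantor set D in B
      on which f^n is injective with f^n(D) <= f^n(C k).  Doing this for the balls of a countable
      base yields Cantor sets D k with iterates f^(nD k) mapping them into C k.
   5. T is the union of the forward orbits f^a(D k).  It is invariant and dense, f is injective
      on T (by independence), so T is the union of the Cantor sets f^a(D k); and two distinct
      points of T eventually follow the orbits of two distinct points of S, from which T
      inherits syndetic proximality, non-asymptoticity and the limsup bound. *)

Section CompactDynamics.
Context {X : Type} {d : X -> X -> R}.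
Hypothesis Hd : is_metric d.

Lemma d_nonneg x y : 0 <= d x y. Proof. apply Hd. Qed.
Lemma d_self x : d x x = 0. Proof. apply Hd; reflexivity. Qed.
Lemma d_zero x y : d x y = 0 -> x = y. Proof. apply Hd. Qed.
Lemma d_sym x y : d x y = d y x. Proof. apply Hd. Qed.
Lemma d_tri x y z : d x z <= d x y + d y z. Proof. apply Hd. Qed.

Lemma d_pos x y : x <> y -> 0 < d x y.
Proof.
  intros Hxy. destruct (Rle_lt_or_eq_dec 0 (d x y) (d_nonneg x y)) as [H|H]; auto.
  exfalso; apply Hxy, d_zero; auto.
Qed.

Lemma d_tri_mid x c y : d x y <= d c x + d c y.
Proof. rewrite (d_sym c x). apply d_tri. Qed.

Lemma open_ball c r : m_open d (fun y => d c y < r).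
Proof.
  intros x Hx. exists (r - d c x); split; [lra|].
  intros y Hy. pose proof (d_tri c x y). lra.
Qed.

Lemma open_ball_exterior c r : m_open d (fun y => r < d c y).
Proof.
  intros x Hx. exists (d c x - r); split; [lra|].
  intros y Hy. pose proof (d_tri c y x). rewrite (d_sym y x) in H. lra.
Qed.

Lemma closed_ball c r : m_closed d (fun y => d c y <= r).
Proof.
  intros x Hx. apply Rnot_le_lt in Hx.
  destruct (open_ball_exterior c r x Hx) as [e [He H]].
  exists e; split; auto. intros y Hy. specialize (H y Hy). lra.
Qed.

Lemma closed_ext (P Q : X -> Prop) :
  (forall x, P x <-> Q x) -> m_closed d P -> m_closed d Q.
Proof.
  intros E HP x Hx. assert (HPx : ~ P x) by (rewrite E; auto).
  destruct (HP x HPx) as [r [Hr G]]. exists r; split; auto.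
  intros y Hy. rewrite <- E. auto.
Qed.

Lemma closed_and (P Q : X -> Prop) :
  m_closed d P -> m_closed d Q -> m_closed d (fun x => P x /\ Q x).
Proof.
  intros HP HQ x Hx. apply not_and_or in Hx. destruct Hx as [Hx|Hx].
  - destruct (HP x Hx) as [r [Hr H]]. exists r; split; auto. intros y Hy [A _]. exact (H y Hy A).
  - destruct (HQ x Hx) as [r [Hr H]]. exists r; split; auto. intros y Hy [_ B]. exact (H y Hy B).
Qed.

Lemma closed_forall (I : Type) (P : I -> X -> Prop) :
  (forall i, m_closed d (P i)) -> m_closed d (fun x => forall i, P i x).
Proof.
  intros HP x Hx. apply not_all_ex_not in Hx. destruct Hx as [i Hi].
  destruct (HP i x Hi) as [r [Hr H]]. exists r; split; auto.
  intros y Hy A. exact (H y Hy (A i)).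
Qed.

Lemma closed_or (P Q : X -> Prop) :
  m_closed d P -> m_closed d Q -> m_closed d (fun x => P x \/ Q x).
Proof.
  intros HP HQ x Hx. apply not_or_and in Hx. destruct Hx as [H1 H2].
  destruct (HP x H1) as [r1 [Hr1 G1]]. destruct (HQ x H2) as [r2 [Hr2 G2]].
  exists (Rmin r1 r2); split; [apply Rmin_pos; auto|].
  pose proof (Rmin_l r1 r2). pose proof (Rmin_r r1 r2).
  intros y Hy [A|A]; [apply (G1 y)|apply (G2 y)]; auto; lra.
Qed.

Lemma closed_finite_union (I : Type) (l : list I) (P : I -> X -> Prop) :
  (forall i, In i l -> m_closed d (P i)) -> m_closed d (fun x => exists i, In i l /\ P i x).
Proof.
  induction l as [|a l IH]; intros H.
  - intros x _. exists 1; split; [lra|]. intros y _ [i [[] _]].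
  - apply closed_ext with (fun x => P a x \/ exists i, In i l /\ P i x).
    + intros x; split.
      * intros [A|[i [B C]]]; [exists a|exists i]; simpl; auto.
      * intros [i [[B|B] C]]; [subst; auto|right; exists i; auto].
    + apply closed_or; [apply H; simpl; auto|apply IH; intros; apply H; simpl; auto].
Qed.

Lemma list_max_bound (l : list nat) : exists N, forall i, In i l -> (i <= N)%nat.
Proof.
  induction l as [|a l [N HN]]; [exists 0%nat; intros i []|].
  exists (Nat.max a N). intros i [H|H]; [subst; lia|specialize (HN i H); lia].
Qed.

Lemma inv_succ_pos n : 0 < / (INR n + 1).
Proof. apply Rinv_0_lt_compat. pose proof (pos_INR n); lra. Qed.

Lemma inv_succ_le n m : (n <= m)%nat -> / (INR m + 1) <= / (INR n + 1).
Proof.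
  intros H. apply Rinv_le_contravar; [pose proof (pos_INR n); lra|].
  apply le_INR in H; lra.
Qed.

Lemma small_radius e : 0 < e -> exists N, 2 / (INR N + 1) < e.
Proof.
  intros He. destruct (INR_archimed e 2) as [N HN]; auto. exists N.
  pose proof (pos_INR N). apply Rmult_lt_reg_r with (INR N + 1); [lra|].
  unfold Rdiv. rewrite Rmult_assoc, Rinv_l by lra. nra.
Qed.

(* Compact subsets are closed (a point outside is covered by exteriors of small balls). *)
Lemma compact_closed (Q : X -> Prop) : m_compact d Q -> m_closed d Q.
Proof.
  intros HQ x Hx.
  destruct (HQ nat (fun n z => / (INR n + 1) < d x z)) as [l Hl].
  - intros n; apply open_ball_exterior.
  - intros z Hz. assert (Hxz : x <> z) by (intro; subst; auto).
    apply d_pos in Hxz. destruct (INR_archimed (d x z) 1) as [n Hn]; auto.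
    exists n. pose proof (pos_INR n).
    apply Rmult_lt_reg_r with (INR n + 1); [lra|]. rewrite Rinv_l; nra.
  - destruct (list_max_bound l) as [N HN].
    exists (/ (INR N + 1)); split; [apply inv_succ_pos|].
    intros y Hy Qy. destruct (Hl y Qy) as [i [Hi Hi2]].
    pose proof (inv_succ_le _ _ (HN i Hi)). lra.
Qed.

Hypothesis Hcpt : compact_space d.

Lemma closed_compact (Q : X -> Prop) : m_closed d Q -> m_compact d Q.
Proof.
  intros HQ I U HU Hcov.
  destruct (Hcpt (option I)
      (fun o x => match o with Some i => U i x | None => ~ Q x end)) as [l Hl].
  - intros [i|]; auto.
  - intros x _. destruct (classic (Q x)) as [H|H].
    + destruct (Hcov x H) as [i Hi]. exists (Some i); auto.
    + exists None; auto.
  - exists (flat_map (fun o => match o with Some i => i :: nil | None => nil end) l).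
    intros x Hx. destruct (Hl x Logic.I) as [[i|] [H1 H2]]; [|contradiction].
    exists i; split; auto. apply in_flat_map. exists (Some i); simpl; auto.
Qed.

Lemma finite_ball_cover e : 0 < e -> exists l : list X, forall y, exists q, In q l /\ d q y < e.
Proof.
  intros He. destruct (Hcpt X (fun q y => d q y < e)) as [l Hl].
  - intros q; apply open_ball.
  - intros y _. exists y. rewrite d_self; auto.
  - exists l. intros y. apply (Hl y Logic.I).
Qed.

Lemma nested_closed_inter (Q : nat -> X -> Prop) :
  (forall n, m_closed d (Q n)) -> (forall n, exists x, Q n x) ->
  (forall n x, Q (S n) x -> Q n x) -> exists x, forall n, Q n x.
Proof.
  intros HC Hne Hdec. apply NNPP; intros Hno.
  assert (Hmono : forall n m x, (n <= m)%nat -> Q m x -> Q n x)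
    by (intros n m x Hnm; induction Hnm; auto).
  destruct (Hcpt nat (fun n x => ~ Q n x)) as [l Hl].
  - intros n; apply HC.
  - intros x _. apply NNPP; intros H. apply Hno. exists x.
    intros n. apply NNPP; intros H2. apply H; eauto.
  - destruct (list_max_bound l) as [N HN]. destruct (Hne N) as [y Hy].
    destruct (Hl y Logic.I) as [i [Hi Hi2]]. apply Hi2, (Hmono i N); auto.
Qed.

Lemma continuous_preimage_open (h : X -> X) (U : X -> Prop) :
  continuous_map d h -> m_open d U -> m_open d (fun x => U (h x)).
Proof.
  intros Hh HU x Hx. destruct (HU _ Hx) as [r [Hr G]].
  destruct (Hh x r Hr) as [e [He G2]]. exists e; split; auto.
Qed.

Lemma continuous_preimage_closed (h : X -> X) (U : X -> Prop) :
  continuous_map d h -> m_closed d U -> m_closed d (fun x => U (h x)).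
Proof. intros Hh HU. apply (continuous_preimage_open h _ Hh HU). Qed.

Lemma continuous_image_compact (h : X -> X) (Q : X -> Prop) :
  continuous_map d h -> m_compact d Q -> m_compact d (fun y => exists x, Q x /\ y = h x).
Proof.
  intros Hh HQ I U HU Hcov. destruct (HQ I (fun i x => U i (h x))) as [l Hl].
  - intros i; apply continuous_preimage_open; auto.
  - intros x Hx. apply Hcov. exists x; auto.
  - exists l. intros y [x [Hx ->]]. auto.
Qed.

Lemma continuous_image_closed (h : X -> X) (Q : X -> Prop) :
  continuous_map d h -> m_closed d Q -> m_closed d (fun y => exists x, Q x /\ y = h x).
Proof.
  intros Hh HQ. apply compact_closed, continuous_image_compact, closed_compact; auto.
Qed.

Lemma iter_continuous (h : X -> X) n : continuous_map d h -> continuous_map d (Nat.iter n h).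
Proof.
  intros Hh. induction n as [|n IH]; simpl; intros x e He.
  - exists e; split; auto.
  - destruct (Hh (Nat.iter n h x) e He) as [e1 [He1 G1]].
    destruct (IH x e1 He1) as [e2 [He2 G2]]. exists e2; split; auto.
    intros y Hy. apply G1, G2, Hy.
Qed.

(* A countable base of balls: every nonempty open set contains one of the balls B(c k, r k).
   The centers run through finite 1/(m+1)-nets, enumerated by Cantor pairing. *)
Lemma countable_ball_base (x0 : X) : exists (c : nat -> X) (r : nat -> R),
  (forall k, 0 < r k) /\
  forall U, m_open d U -> (exists x, U x) -> exists k, forall y, d (c k) y < r k -> U y.
Proof.
  pose (net_spec := fun m =>
    constructive_indefinite_description _ (finite_ball_cover _ (inv_succ_pos m))).
  exists (fun k => nth (snd (Cantor.of_nat k)) (proj1_sig (net_spec (fst (Cantor.of_nat k)))) x0),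
         (fun k => / (INR (fst (Cantor.of_nat k)) + 1)).
  split; [intros; apply inv_succ_pos|].
  intros U HU [p Hp]. destruct (HU p Hp) as [r [Hr Hball]].
  destruct (small_radius r Hr) as [m Hm].
  destruct (proj2_sig (net_spec m) p) as [q [Hq Hqp]].
  apply In_nth with (d := x0) in Hq. destruct Hq as [i [_ Hi]].
  exists (Cantor.to_nat (m, i)). rewrite Cantor.cancel_of_to; simpl. rewrite Hi.
  intros y Hy. apply Hball. pose proof (d_tri_mid p q y).
  assert (2 / (INR m + 1) = / (INR m + 1) + / (INR m + 1)) by (unfold Rdiv; lra). lra.
Qed.

(* Q splits between any two of its points into two disjoint closed pieces covering Q;
   for a closed Q this is total disconnectedness in a form that transfers along maps. *)
Definition clopen_separated (Q : X -> Prop) : Prop :=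
  forall a b, Q a -> Q b -> a <> b -> exists P1 P2 : X -> Prop,
    m_closed d P1 /\ m_closed d P2 /\ (forall x, Q x -> P1 x \/ P2 x) /\
    (forall x, P1 x -> Q x) /\ (forall x, P2 x -> Q x) /\
    (forall x, P1 x -> P2 x -> False) /\ P1 a /\ P2 b.

Definition cantor_like (Q : X -> Prop) : Prop :=
  (exists x, Q x) /\ m_closed d Q /\
  (forall x, Q x -> forall eps, 0 < eps -> exists y, Q y /\ y <> x /\ d x y < eps) /\
  clopen_separated Q.

Lemma clopen_separated_totally_disconnected (Q : X -> Prop) :
  clopen_separated Q -> totally_disconnected d Q.
Proof.
  intros HS C HCQ HC x y Cx Cy. apply NNPP; intros Hxy.
  destruct (HS x y (HCQ x Cx) (HCQ y Cy) Hxy)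
    as [P1 [P2 [C1 [C2 [Cov [_ [_ [Dj [Px Py]]]]]]]]].
  apply HC. exists (fun z => ~ P2 z), (fun z => ~ P1 z). repeat split; auto.
  - intros z Hz. destruct (Cov z (HCQ z Hz)) as [A|A];
      [left|right]; intro B; eauto.
  - exists x; split; auto. intro B; eauto.
  - exists y; split; auto. intro B; eauto.
  - intros z Hz A B. destruct (Cov z (HCQ z Hz)); auto.
Qed.

Lemma cantor_like_cantor (Q : X -> Prop) : cantor_like Q -> cantor_set d Q.
Proof.
  intros [H1 [H2 [H3 H4]]]. repeat split; auto.
  - apply closed_compact; auto.
  - apply clopen_separated_totally_disconnected; auto.
Qed.

Lemma cantor_like_image (h : X -> X) (Q : X -> Prop) :
  continuous_map d h -> cantor_like Q ->
  (forall x y, Q x -> Q y -> h x = h y -> x = y) ->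
  cantor_like (fun y => exists x, Q x /\ y = h x).
Proof.
  intros Hh [[x0 H1] [H2 [H3 H4]]] Hinj. repeat split.
  - exists (h x0), x0; auto.
  - apply continuous_image_closed; auto.
  - intros y [x [Qx ->]] eps Heps. destruct (Hh x eps Heps) as [e [He G]].
    destruct (H3 x Qx e He) as [x' [Qx' [Hne Hd']]].
    exists (h x'); split; [exists x'; auto|split; auto].
  - intros a b [xa [Qa ->]] [xb [Qb ->]] Hab.
    assert (Hne : xa <> xb) by (intro; subst; auto).
    destruct (H4 xa xb Qa Qb Hne) as [P1 [P2 [C1 [C2 [Cov [S1 [S2 [Dj [Pa Pb]]]]]]]]].
    exists (fun y => exists x, P1 x /\ y = h x), (fun y => exists x, P2 x /\ y = h x).
    repeat split.
    + apply continuous_image_closed; auto.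
    + apply continuous_image_closed; auto.
    + intros y [x [Qx ->]]. destruct (Cov x Qx); [left|right]; exists x; auto.
    + intros y [x [Px ->]]. exists x; auto.
    + intros y [x [Px ->]]. exists x; auto.
    + intros y [x [Px ->]] [x' [Px' E]]. apply (Dj x); auto. rewrite (Hinj x x'); auto.
    + exists xa; auto.
    + exists xb; auto.
Qed.

Fixpoint words (n : nat) : list (list bool) :=
  match n with
  | O => nil :: nil
  | S n => flat_map (fun s => (true :: s) :: (false :: s) :: nil) (words n)
  end.

Lemma words_complete s : In s (words (length s)).
Proof.
  induction s as [|b s IH]; simpl; auto.
  apply in_flat_map. exists s; split; auto. destruct b; simpl; auto.
Qed.

Lemma words_length n s : In s (words n) -> length s = n.
Proof.
  revert s; induction n as [|n IH]; simpl; intros s H.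
  - destruct H as [H|[]]; subst; auto.
  - apply in_flat_map in H. destruct H as [t [Ht H]].
    destruct H as [H|[H|[]]]; subst; simpl; rewrite (IH t); auto.
Qed.

Section CantorScheme.
Variable P : list bool -> X -> Prop.
Hypothesis scheme_closed : forall s, m_closed d (P s).
Hypothesis scheme_nonempty : forall s, exists x, P s x.
Hypothesis scheme_decr : forall s b x, P (b :: s) x -> P s x.
Hypothesis scheme_disj : forall s x, P (true :: s) x -> P (false :: s) x -> False.
Hypothesis scheme_diam :
  forall s b x y, P (b :: s) x -> P (b :: s) y -> d x y <= 2 / (INR (length s) + 1).

Lemma scheme_ancestor l s x : P (l ++ s) x -> P s x.
Proof. induction l as [|b l IH]; simpl; auto. intros H; apply IH; eapply scheme_decr; eauto. Qed.

Lemma scheme_level_disj s t x : length s = length t -> s <> t -> P s x -> P t x -> False.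
Proof.
  revert t; induction s as [|b s IH]; intros [|b' t] Hl Hne Hs Ht; simpl in *; try discriminate.
  - apply Hne; auto.
  - destruct (list_eq_dec Bool.bool_dec s t) as [E|E].
    + subst. destruct b, b'; try (apply Hne; reflexivity); eauto.
    + apply (IH t); eauto.
Qed.

Lemma scheme_nested s t x : (length s <= length t)%nat -> P s x -> P t x ->
  forall y, P t y -> P s y.
Proof.
  intros Hl Hs Ht y Hy.
  set (k := (length t - length s)%nat).
  assert (E : t = firstn k t ++ skipn k t) by (symmetry; apply firstn_skipn).
  assert (Hsk : skipn k t = s).
  { apply NNPP; intros Hne. apply (scheme_level_disj (skipn k t) s x); auto.
    - rewrite length_skipn; unfold k; lia.
    - apply scheme_ancestor with (firstn k t). rewrite <- E; auto. }
  rewrite <- Hsk. apply scheme_ancestor with (firstn k t). rewrite <- E; auto.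
Qed.

Definition scheme_limit (s : list bool) (x : X) : Prop :=
  P s x /\ forall n, exists t, length t = n /\ P t x.

Lemma scheme_limit_nonempty s : exists x, scheme_limit s x.
Proof.
  destruct (nested_closed_inter (fun n => P (repeat false n ++ s))) as [x Hx]; auto.
  - intros n x H. simpl in H. eapply scheme_decr; eauto.
  - exists x. split; [apply (Hx 0%nat)|]. intros n.
    destruct (le_lt_dec (length s) n) as [H|H].
    + exists (repeat false (n - length s) ++ s).
      split; auto. rewrite length_app, repeat_length. lia.
    + exists (skipn (length s - n) s). split; [rewrite length_skipn; lia|].
      apply scheme_ancestor with (firstn (length s - n) s).
      rewrite firstn_skipn. apply (Hx 0%nat).
Qed.

Lemma scheme_level_closed n : m_closed d (fun x => exists t, length t = n /\ P t x).
Proof.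
  apply closed_ext with (fun x => exists t, In t (words n) /\ P t x).
  - intros x; split; intros [t [A B]]; exists t; split; auto.
    + apply words_length; auto.
    + subst; apply words_complete.
  - apply closed_finite_union. auto.
Qed.

Lemma scheme_limit_closed s : m_closed d (scheme_limit s).
Proof. apply closed_and; auto. apply closed_forall, scheme_level_closed. Qed.

Lemma scheme_limit_perfect s x : scheme_limit s x ->
  forall eps, 0 < eps -> exists y, scheme_limit s y /\ y <> x /\ d x y < eps.
Proof.
  intros [Hs Hall] eps Heps. destruct (small_radius eps Heps) as [N HN].
  destruct (Hall (S (N + length s))) as [[|b t] [Hlt Ht]]; try discriminate.
  injection Hlt as Hlt.
  assert (Hsub : forall y, P (b :: t) y -> P s y)
    by (apply scheme_nested with x; auto; simpl; lia).
  (* some child of [b :: t] misses x; a limit point below that child works *)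
  assert (Hc : exists c, ~ P (c :: b :: t) x).
  { destruct (classic (P (true :: b :: t) x)) as [H|H].
    - exists false; intro H2; eapply scheme_disj; eauto.
    - exists true; auto. }
  destruct Hc as [c Hc]. destruct (scheme_limit_nonempty (c :: b :: t)) as [y [Hy1 Hy2]].
  assert (Hby : P (b :: t) y) by (eapply scheme_decr; eauto).
  exists y. split; [|split].
  - split; auto.
  - intro E; subst; auto.
  - eapply Rle_lt_trans; [apply (scheme_diam t b); eauto|]. rewrite Hlt.
    eapply Rle_lt_trans; [|apply HN]. unfold Rdiv.
    apply Rmult_le_compat_l; [lra|]. apply inv_succ_le. lia.
Qed.

Lemma scheme_limit_separated s : clopen_separated (scheme_limit s).
Proof.
  intros a b Ha Hb Hab. destruct (small_radius _ (d_pos _ _ Hab)) as [N HN].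
  destruct (proj2 Ha (S N)) as [[|c t] [Hlt Ht]]; try discriminate. injection Hlt as Hlt.
  destruct (proj2 Hb (S N)) as [t2 [Hlt2 Ht2]].
  (* a and b lie in different level-(N+1) pieces, since these are small *)
  assert (Hne : c :: t <> t2).
  { intro E; subst t2. pose proof (scheme_diam t c a b Ht Ht2). rewrite Hlt in H. lra. }
  exists (fun x => scheme_limit s x /\ P (c :: t) x),
         (fun x => scheme_limit s x /\ exists u, length u = S N /\ u <> c :: t /\ P u x).
  split; [|split; [|split; [|split; [|split; [|split; [|split]]]]]].
  - apply closed_and; auto. apply scheme_limit_closed.
  - apply closed_and; [apply scheme_limit_closed|].
    apply closed_ext with (fun x => exists u, In u (filter (fun u =>
        if list_eq_dec Bool.bool_dec u (c :: t) then false else true) (words (S N))) /\ P u x).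
    + intros x; split.
      * intros [u [Hu Pu]]; exists u. apply filter_In in Hu. destruct Hu as [Hu1 Hu2].
        destruct (list_eq_dec Bool.bool_dec u (c :: t)); try discriminate.
        repeat split; auto. apply words_length; auto.
      * intros [u [Hu1 [Hu2 Pu]]]; exists u. split; auto. apply filter_In.
        split; [rewrite <- Hu1; apply words_complete|].
        destruct (list_eq_dec Bool.bool_dec u (c :: t)); tauto.
    + apply closed_finite_union; auto.
  - intros x Hx. destruct (proj2 Hx (S N)) as [u [Hlu Pu]].
    destruct (list_eq_dec Bool.bool_dec u (c :: t)) as [E|E].
    + subst; left; auto.
    + right; split; auto. exists u; auto.
  - intros x [A _]; auto.
  - intros x [A _]; auto.
  - intros x [_ A] [_ [u [Hu [Hne2 Pu]]]].
    apply (scheme_level_disj u (c :: t) x); auto. simpl; lia.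
  - split; auto.
  - split; auto. exists t2; auto.
Qed.

Lemma scheme_limit_cantor_like s : cantor_like (scheme_limit s).
Proof.
  split; [apply scheme_limit_nonempty|]. split; [apply scheme_limit_closed|].
  split; [apply scheme_limit_perfect|apply scheme_limit_separated].
Qed.

Lemma scheme_comb_disjoint k j x : (k < j)%nat ->
  P (false :: repeat true k) x -> P (false :: repeat true j) x -> False.
Proof.
  intros Hkj Hk Hj.
  assert (E : false :: repeat true j = (false :: repeat true (j - k - 1)) ++ repeat true (S k)).
  { rewrite <- app_comm_cons, <- repeat_app. do 2 f_equal. lia. }
  rewrite E in Hj. apply scheme_ancestor in Hj.
  apply (scheme_level_disj (false :: repeat true k) (repeat true (S k)) x); auto.
  discriminate.
Qed.

End CantorScheme.

Definition piece (M : X -> Prop) (p : X * R) (x : X) : Prop := M x /\ d (fst p) x <= snd p.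

Lemma piece_closed M p : m_closed d M -> m_closed d (piece M p).
Proof. intros HM. apply closed_and; auto. apply closed_ball. Qed.

Lemma piece_center M p : M (fst p) -> 0 <= snd p -> piece M p (fst p).
Proof. intros; split; auto. rewrite d_self; auto. Qed.

Lemma piece_sub M p q x : d (fst p) (fst q) <= snd p / 2 -> snd q <= snd p / 2 ->
  piece M q x -> piece M p x.
Proof. intros H1 H2 [Hx Hq]; split; auto. pose proof (d_tri (fst p) (fst q) x). lra. Qed.

Lemma piece_shrink M c r r' x : r' <= r -> piece M (c, r') x -> piece M (c, r) x.
Proof. intros H [A B]; split; simpl in *; auto; lra. Qed.

Lemma piece_diam M p x y : piece M p x -> piece M p y -> d x y <= 2 * snd p.
Proof. intros [_ H1] [_ H2]. pose proof (d_tri_mid x (fst p) y). lra. Qed.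

Lemma perfect_near M c r q : perfect_set d M -> M c -> 0 < r ->
  exists z, M z /\ d c z <= r / 2 /\ z <> q.
Proof.
  intros [_ HP] Hc Hr. destruct (classic (c = q)) as [E|E].
  - destruct (HP c Hc (r / 2)) as [y [Hy [Hne Hdy]]]; [lra|].
    exists y; repeat split; auto; [lra|congruence].
  - exists c; repeat split; auto. rewrite d_self; lra.
Qed.

Lemma continuous_avoid (g : X -> X) a b : continuous_map d g -> a <> g b ->
  exists r, 0 < r /\ forall z w, d a z <= r -> d b w <= r -> z <> g w.
Proof.
  intros Hg Hab. pose proof (d_pos _ _ Hab) as He. set (e := d a (g b)) in *.
  destruct (Hg b (e / 2)) as [del [Hdel Hcont]]; [lra|].
  exists (Rmin (e / 3) (del / 2)). pose proof (Rmin_l (e / 3) (del / 2)).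
  pose proof (Rmin_r (e / 3) (del / 2)). split; [apply Rmin_pos; lra|].
  intros z w Hz Hw ->. specialize (Hcont w ltac:(lra)).
  pose proof (d_tri a (g w) (g b)). rewrite (d_sym (g w)) in H1. fold e in H1. lra.
Qed.

Lemma finite_positive_min (a : nat -> R) c : (forall k, 0 < a k) ->
  exists eta, 0 < eta /\ forall k, (k < c)%nat -> eta <= a k.
Proof.
  intros Ha. induction c as [|c [e [He H]]]; [exists 1; split; [lra|]; intros; lia|].
  exists (Rmin e (a c)); split; [apply Rmin_pos; auto|]. intros k Hk.
  destruct (Nat.eq_dec k c); [subst; apply Rmin_r|].
  eapply Rle_trans; [apply Rmin_l|apply H; lia].
Qed.

Lemma finite_closed_cover_piece (M : X -> Prop) (I : Type) (l : list I) (F : I -> X -> Prop) :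
  (forall i, m_closed d (F i)) -> forall c r, M c -> 0 < r ->
  (forall x, M x -> d c x < r -> exists i, In i l /\ F i x) ->
  exists i c' r', In i l /\ M c' /\ 0 < r' /\
    forall x, M x -> d c' x <= r' -> F i x /\ d c x < r.
Proof.
  intros HF. induction l as [|i0 l IH]; intros c r Mc Hr H.
  - destruct (H c Mc) as [i [[] _]]. rewrite d_self; auto.
  - destruct (classic (forall x, M x -> d c x <= r / 2 -> F i0 x)) as [Y|N].
    + exists i0, c, (r / 2). split; [simpl; auto|split; [auto|split; [lra|]]].
      intros x Mx Dx. split; [apply Y; auto|lra].
    + (* a point x0 of the half ball outside F i0 has a ball avoiding F i0;
         the remaining sets cover it *)
      apply not_all_ex_not in N. destruct N as [x0 N].
      apply imply_to_and in N. destruct N as [Mx0 N].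
      apply imply_to_and in N. destruct N as [Dx0 Fx0].
      destruct (HF i0 x0 Fx0) as [del [Hdel Hav]].
      set (r2 := Rmin del (r / 2)).
      assert (R1 : 0 < r2) by (apply Rmin_pos; lra).
      assert (R2 : r2 <= del) by apply Rmin_l. assert (R3 : r2 <= r / 2) by apply Rmin_r.
      destruct (IH x0 r2 Mx0 R1) as [i [c' [r' [Hi [Mc' [Hr' G]]]]]].
      * intros x Mx Dx. pose proof (d_tri c x0 x).
        destruct (H x Mx ltac:(lra)) as [i [[E|Hi] Fi]]; [|exists i; auto].
        subst i. exfalso. apply (Hav x); auto. lra.
      * exists i, c', r'. split; [simpl; auto|split; [auto|split; [auto|]]].
        intros x Mx Dx. destruct (G x Mx Dx) as [G1 G2]. split; auto.
        pose proof (d_tri c x0 x). lra.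
Qed.

Section Dynamics.
Variable f : X -> X.

Lemma iter_comp a b x : Nat.iter a f (Nat.iter b f x) = Nat.iter (a + b) f x.
Proof. symmetry; apply Nat.iter_add. Qed.

Lemma iter_mod c z n : c <> 0%nat -> Nat.iter c f z = z ->
  Nat.iter n f z = Nat.iter (n mod c) f z.
Proof.
  intros Hc Hz.
  assert (Hper : forall q, Nat.iter (c * q) f z = z).
  { induction q as [|q IH]; [rewrite Nat.mul_0_r; auto|].
    replace (c * S q)%nat with (c + c * q)%nat by lia. rewrite Nat.iter_add, IH; auto. }
  transitivity (Nat.iter (n mod c + c * (n / c)) f z).
  - f_equal. pose proof (Nat.div_mod_eq n c). lia.
  - rewrite Nat.iter_add, Hper. reflexivity.
Qed.

Lemma syndetic_eventually (A A' : nat -> Prop) N0 :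
  (forall n, (N0 <= n)%nat -> A n -> A' n) -> syndetic A -> syndetic A'.
Proof.
  intros H HA B HB. destruct (HA (fun n => B n /\ (N0 <= n)%nat)) as [n [An [Bn Hn]]].
  - intros L. destruct (HB (L + N0)%nat) as [m Hm]. exists (m + N0)%nat.
    intros i Hi. split; [|lia]. replace (m + N0 + i)%nat with (m + (N0 + i))%nat by lia.
    apply Hm; lia.
  - exists n; auto.
Qed.

Lemma eventually_equal_orbits u v su sv N0 :
  (forall N, (N0 <= N)%nat -> Nat.iter N f u = Nat.iter N f su /\ Nat.iter N f v = Nat.iter N f sv) ->
  (synd_proximal d f su sv -> synd_proximal d f u v) /\
  (asymptotic d f u v -> asymptotic d f su sv) /\
  (forall e, limsup_ge d f e su sv -> limsup_ge d f e u v).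
Proof.
  intros H. split; [|split].
  - intros Hp eta He. apply syndetic_eventually
      with (fun n => d (Nat.iter n f su) (Nat.iter n f sv) < eta) N0; auto.
    intros n Hn A. destruct (H n Hn) as [E1 E2]. rewrite E1, E2; auto.
  - intros Ha e He. destruct (Ha e He) as [N HN]. exists (Nat.max N N0). intros n Hn.
    destruct (H n ltac:(lia)) as [E1 E2]. rewrite <- E1, <- E2. apply HN; lia.
  - intros e Hl del Hdel N. destruct (Hl del Hdel (Nat.max N N0)) as [n [Hn Hn2]].
    exists n; split; [lia|]. destruct (H n ltac:(lia)) as [E1 E2]. rewrite E1, E2; auto.
Qed.

Section Scrambled.
Variable Sc : X -> Prop.
Hypothesis HS : synd_scrambled d f Sc.
Hypothesis HfS : forall x, Sc x -> Sc (f x).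

Lemma scrambled_iter n x : Sc x -> Sc (Nat.iter n f x).
Proof. intros H. apply Nat.iter_invariant; auto. Qed.

(* Distinct points with the same image would be asymptotic. *)
Lemma scrambled_f_inj x y : Sc x -> Sc y -> f x = f y -> x = y.
Proof.
  intros Hx Hy E. apply NNPP; intros Hne. apply (proj2 (proj2 HS x y Hx Hy Hne)).
  intros eps Heps. exists 1%nat. intros [|n] Hn; [lia|].
  rewrite !Nat.iter_succ_r, E, d_self. unfold R_dist. rewrite Rminus_0_r, Rabs_R0; auto.
Qed.

Lemma scrambled_iter_inj n x y : Sc x -> Sc y -> Nat.iter n f x = Nat.iter n f y -> x = y.
Proof.
  induction n as [|n IH]; simpl; auto. intros Hx Hy E.
  apply IH; auto. apply scrambled_f_inj; auto; apply scrambled_iter; auto.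
Qed.

(* Two distinct c-periodic points of Sc stay a fixed distance apart, contradicting
   syndetic proximality. *)
Lemma scrambled_no_common_period z1 z2 c : Sc z1 -> Sc z2 -> z1 <> z2 -> (1 <= c)%nat ->
  Nat.iter c f z1 = z1 -> Nat.iter c f z2 = z2 -> False.
Proof.
  intros H1 H2 Hne Hc P1 P2.
  set (a := fun n => d (Nat.iter n f z1) (Nat.iter n f z2)).
  assert (Ha : forall k, 0 < a k).
  { intros k. apply d_pos. intro E. apply Hne. eapply scrambled_iter_inj; eauto. }
  destruct (finite_positive_min a c Ha) as [eta [He Heta]].
  destruct (proj1 (proj2 HS z1 z2 H1 H2 Hne) eta He (fun _ => True)) as [n [Hn _]].
  - intros L. exists 0%nat; auto.
  - assert (Hmod : a n = a (n mod c)).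
    { unfold a. rewrite (iter_mod c z1 n), (iter_mod c z2 n); auto; lia. }
    fold (a n) in Hn. rewrite Hmod in Hn.
    specialize (Heta (n mod c)%nat (Nat.mod_upper_bound n c ltac:(lia))). lra.
Qed.

End Scrambled.

Hypothesis Hf : continuous_map d f.

(* Inside a perfect set K consisting of scrambled points we build countably many disjoint
   Cantor sets C k such that no point of any C k is a positive iterate of a point of any C j.
   They are limits of a Cantor scheme whose level n is a family of balls F s (|s| = n)
   centered in K, shrunk so that the pieces of level n avoid each other's first n iterates. *)
Section IndependentFamily.
Variable Sc K : X -> Prop.
Hypothesis HS : synd_scrambled d f Sc.
Hypothesis HfS : forall x, Sc x -> Sc (f x).
Hypothesis HKS : forall x, K x -> Sc x.
Hypothesis HKc : m_closed d K.
Hypothesis HKp : perfect_set d K.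
Variable k0 : X.
Hypothesis Hk0 : K k0.

Definition centered n (F : list bool -> X * R) : Prop :=
  forall s, length s = n -> K (fst (F s)) /\ 0 < snd (F s).

Definition refines n (F' F : list bool -> X * R) : Prop :=
  centered n F' /\ forall s, length s = n -> forall x, piece K (F' s) x -> piece K (F s) x.

Definition orbit_avoids (F : list bool -> X * R) s t c : Prop :=
  forall z w, piece K (F s) z -> piece K (F t) w -> z <> Nat.iter c f w.

Lemma refines_trans n F1 F2 F3 : refines n F1 F2 -> refines n F2 F3 -> refines n F1 F3.
Proof. intros [A B] [C D]; split; auto. Qed.

Lemma orbit_avoids_refines n F' F s t c : refines n F' F -> length s = n -> length t = n ->
  orbit_avoids F s t c -> orbit_avoids F' s t c.
Proof. intros [_ H] Hs Ht HC z w Hz Hw. apply HC; apply H; auto. Qed.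

Definition update (F : list bool -> X * R) s p : list bool -> X * R :=
  fun u => if list_eq_dec Bool.bool_dec u s then p else F u.

Lemma update_same F s p : update F s p s = p.
Proof. unfold update. destruct (list_eq_dec Bool.bool_dec s s); congruence. Qed.

Lemma update_other F s p u : u <> s -> update F s p u = F u.
Proof. unfold update. destruct (list_eq_dec Bool.bool_dec u s); congruence. Qed.

Lemma update_refines n F s p : centered n F -> length s = n -> K (fst p) -> 0 < snd p ->
  (forall x, piece K p x -> piece K (F s) x) -> refines n (update F s p) F.
Proof.
  intros HF Hs Kp Hp Hsub. split; intros u Hu;
    (destruct (list_eq_dec Bool.bool_dec u s) as [->|E];
      [rewrite update_same|rewrite update_other by exact E]); auto.
Qed.

(* Making the s-piece avoid its own c-th iterates: move its center to a point of K that is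
   not c-periodic (two distinct c-periodic points of Sc cannot exist) and shrink. *)
Lemma avoid_self n F s c : centered n F -> length s = n -> (1 <= c)%nat ->
  exists F', refines n F' F /\ orbit_avoids F' s s c.
Proof.
  intros HF Hs Hc. destruct (HF s Hs) as [Kc Hr].
  destruct (F s) as [cs rs] eqn:EF; simpl in *.
  assert (Hz : exists z, K z /\ d cs z <= rs / 2 /\ z <> Nat.iter c f z).
  { destruct (perfect_near K cs rs cs HKp Kc Hr) as [y [Ky [Hy Hne]]].
    destruct (classic (cs = Nat.iter c f cs)) as [P1|P1].
    - exists y; repeat split; auto. intro P2.
      apply (scrambled_no_common_period Sc HS HfS cs y c); auto.
    - exists cs; repeat split; auto. rewrite d_self; lra. }
  destruct Hz as [z [Kz [Hdz Hper]]].
  destruct (continuous_avoid _ z z (iter_continuous f c Hf) Hper) as [r [Hr0 Hav]].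
  pose proof (Rmin_l (rs / 2) r). pose proof (Rmin_r (rs / 2) r).
  exists (update F s (z, Rmin (rs / 2) r)). split.
  - apply update_refines; simpl; auto; [apply Rmin_pos; lra|].
    intros x Hx. rewrite EF. apply (piece_sub K (cs, rs) (z, Rmin (rs / 2) r)); auto.
  - intros u w. rewrite update_same. intros [_ Hu] [_ Hw]; simpl in *. apply Hav; lra.
Qed.

Lemma avoid_other n F s t c : centered n F -> length s = n -> length t = n -> s <> t ->
  exists F', refines n F' F /\ orbit_avoids F' s t c.
Proof.
  intros HF Hs Ht Hst. destruct (HF s Hs) as [Kcs Hrs]. destruct (HF t Ht) as [Kct Hrt].
  destruct (F s) as [cs rs] eqn:EFs. destruct (F t) as [ct rt] eqn:EFt. simpl in *.
  destruct (perfect_near K cs rs (Nat.iter c f ct) HKp Kcs Hrs) as [z [Kz [Hdz Hne]]].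
  destruct (continuous_avoid _ z ct (iter_continuous f c Hf) Hne) as [r [Hr0 Hav]].
  pose proof (Rmin_l (rs / 2) r). pose proof (Rmin_r (rs / 2) r).
  pose proof (Rmin_l rt r). pose proof (Rmin_r rt r).
  set (Ft := update F t (ct, Rmin rt r)).
  assert (Rt : refines n Ft F).
  { apply update_refines; simpl; auto; [apply Rmin_pos; lra|].
    intros x Hx. rewrite EFt. apply (piece_shrink K ct rt (Rmin rt r)); auto. }
  exists (update Ft s (z, Rmin (rs / 2) r)). split.
  - eapply refines_trans; [|exact Rt].
    apply update_refines; simpl; auto; [apply Rt|apply Rmin_pos; lra|].
    intros x Hx. unfold Ft. rewrite update_other by exact Hst. rewrite EFs.
    apply (piece_sub K (cs, rs) (z, Rmin (rs / 2) r)); auto.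
  - intros u w. rewrite update_same, update_other by congruence. unfold Ft.
    rewrite update_same. intros [_ Hu] [_ Hw]; simpl in *. apply Hav; lra.
Qed.

Lemma avoid_all n (L : list (list bool * list bool * nat)) F : centered n F ->
  (forall s t c, In (s, t, c) L -> length s = n /\ length t = n /\ (1 <= c)%nat) ->
  exists F', refines n F' F /\ forall s t c, In (s, t, c) L -> orbit_avoids F' s t c.
Proof.
  induction L as [|[[s t] c] L IH]; intros HF HL.
  - exists F; split; [split; auto|]. intros s t c [].
  - destruct IH as [F1 [R1 A1]]; [auto|intros; apply HL; simpl; auto|].
    destruct (HL s t c (or_introl eq_refl)) as [Hs [Ht Hc]].
    assert (Hone : exists F2, refines n F2 F1 /\ orbit_avoids F2 s t c).
    { destruct (list_eq_dec Bool.bool_dec s t) as [<-|E].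
      - apply avoid_self; auto. apply R1.
      - apply avoid_other; auto. apply R1. }
    destruct Hone as [F2 [R2 A2]]. exists F2; split; [eapply refines_trans; eauto|].
    intros s' t' c' [E|Hin]; [injection E as -> -> ->; auto|].
    destruct (HL s' t' c' (or_intror Hin)) as [Hs' [Ht' _]].
    apply (orbit_avoids_refines n F2 F1); auto.
Qed.

Lemma neighbour_choice : exists nb : X * R -> X, forall p, K (fst p) -> 0 < snd p ->
  K (nb p) /\ d (fst p) (nb p) <= snd p / 2 /\ nb p <> fst p.
Proof.
  assert (H : forall p : X * R, exists y, K (fst p) -> 0 < snd p ->
      K y /\ d (fst p) y <= snd p / 2 /\ y <> fst p).
  { intros p. destruct (classic (K (fst p) /\ 0 < snd p)) as [[A B]|N].
    - destruct (perfect_near K _ _ (fst p) HKp A B) as [y Hy]. exists y; auto.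
    - exists k0. intros A B; exfalso; auto. }
  exists (fun p => proj1_sig (constructive_indefinite_description _ (H p))).
  intros p. exact (proj2_sig (constructive_indefinite_description _ (H p))).
Qed.

Definition children_below n (F' F : list bool -> X * R) : Prop :=
  forall s b x, length s = n -> piece K (F' (b :: s)) x -> piece K (F s) x.

Lemma split_level n F : centered n F -> exists F', centered (S n) F' /\ children_below n F' F /\
  (forall s x, length s = n -> piece K (F' (true :: s)) x -> piece K (F' (false :: s)) x -> False) /\
  (forall s x y, length s = S n -> piece K (F' s) x -> piece K (F' s) y -> d x y <= 2 / INR (S n)).
Proof.
  intros HF. destruct neighbour_choice as [nb Hnb].
  set (rho := fun s => Rmin (Rmin (snd (F s) / 2) (d (fst (F s)) (nb (F s)) / 3)) (/ INR (S n))).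
  assert (Hrho : forall s, length s = n -> 0 < rho s /\ rho s <= snd (F s) / 2 /\
      rho s <= d (fst (F s)) (nb (F s)) / 3 /\ rho s <= / INR (S n) /\
      K (nb (F s)) /\ d (fst (F s)) (nb (F s)) <= snd (F s) / 2 /\ 0 < d (fst (F s)) (nb (F s))).
  { intros s Hs. destruct (HF s Hs) as [A B]. destruct (Hnb (F s) A B) as [C [D E]].
    pose proof (d_pos _ _ E). rewrite d_sym in H.
    pose proof (Rmin_l (Rmin (snd (F s) / 2) (d (fst (F s)) (nb (F s)) / 3)) (/ INR (S n))).
    pose proof (Rmin_l (snd (F s) / 2) (d (fst (F s)) (nb (F s)) / 3)).
    pose proof (Rmin_r (snd (F s) / 2) (d (fst (F s)) (nb (F s)) / 3)).
    unfold rho. repeat split; auto; try lra; try apply Rmin_r.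
    apply Rmin_pos; [apply Rmin_pos; lra|apply Rinv_0_lt_compat, lt_0_INR; lia]. }
  exists (fun u : list bool => match u return X * R with
                   | nil => F nil
                   | b :: s => if b then (nb (F s), rho s) else (fst (F s), rho s)
                   end).
  split; [|split; [|split]].
  - intros [|b s] Hs; simpl in Hs; try discriminate. injection Hs as Hs.
    destruct (Hrho s Hs) as [A [_ [_ [_ [B _]]]]]. destruct (HF s Hs).
    destruct b; simpl; auto.
  - intros s b x Hs Hx. destruct (Hrho s Hs) as [A [B [C [D [E [G _]]]]]].
    destruct b; eapply piece_sub; eauto; simpl; try lra. rewrite d_self; lra.
  - intros s x Hs [_ H1] [_ H2]; simpl in *. destruct (Hrho s Hs) as [A [B [C [D [E [G J]]]]]].
    pose proof (d_tri (fst (F s)) x (nb (F s))). rewrite (d_sym x) in H. lra.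
  - intros [|b s] x y Hs Hx Hy; simpl in Hs; try discriminate. injection Hs as Hs.
    destruct (Hrho s Hs) as [_ [_ [_ [D _]]]].
    assert (Hxy : d x y <= 2 * rho s) by (destruct b; apply (piece_diam K _ x y Hx Hy)).
    unfold Rdiv. lra.
Qed.

Definition admissible n (F : list bool -> X * R) : Prop :=
  centered n F /\
  (forall s t x, length s = n -> length t = n -> s <> t ->
     piece K (F s) x -> piece K (F t) x -> False) /\
  (forall s t c, length s = n -> length t = n -> (1 <= c <= n)%nat -> orbit_avoids F s t c) /\
  (forall s x y, length s = n -> (0 < n)%nat ->
     piece K (F s) x -> piece K (F s) y -> d x y <= 2 / INR n).

Lemma admissible_zero : admissible 0 (fun _ => (k0, 1)).
Proof.
  split; [|split; [|split]].
  - intros s _; simpl; split; auto; lra.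
  - intros [|] [|] x Hs Ht Hne; simpl in *; try discriminate. congruence.
  - intros s t c _ _ Hc; lia.
  - intros s x y _ H; lia.
Qed.

Definition avoidance_requests n : list (list bool * list bool * nat) :=
  flat_map (fun s => flat_map (fun t => map (fun c => (s, t, c)) (seq 1 n)) (words n)) (words n).

Lemma avoidance_requests_spec n s t c :
  In (s, t, c) (avoidance_requests n) <-> length s = n /\ length t = n /\ (1 <= c <= n)%nat.
Proof.
  unfold avoidance_requests. rewrite in_flat_map. split.
  - intros [s' [Hs H]]. apply in_flat_map in H. destruct H as [t' [Ht H]].
    apply in_map_iff in H. destruct H as [c' [E Hc]]. injection E as -> -> ->.
    apply in_seq in Hc. repeat split; try lia; apply words_length; auto.
  - intros [Hs [Ht Hc]]. exists s. split; [rewrite <- Hs; apply words_complete|].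
    apply in_flat_map. exists t. split; [rewrite <- Ht; apply words_complete|].
    apply in_map_iff. exists c. split; auto. apply in_seq. lia.
Qed.

Lemma admissible_next n F : admissible n F ->
  exists F', admissible (S n) F' /\ children_below n F' F.
Proof.
  intros [HC [HDj _]]. destruct (split_level n F HC) as [F1 [HC1 [Hch [Hsib Hdiam]]]].
  destruct (avoid_all (S n) (avoidance_requests (S n)) F1 HC1) as [F2 [[HC2 Hsub] Hav]].
  { intros s t c H. apply avoidance_requests_spec in H. intuition lia. }
  exists F2. split; [split; [|split; [|split]]|].
  - exact HC2.
  - intros [|b s] [|b' t] x Hs Ht Hne Hxs Hxt; simpl in Hs, Ht; try discriminate.
    apply Hsub in Hxs; auto. apply Hsub in Hxt; auto. injection Hs as Hs. injection Ht as Ht.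
    destruct (list_eq_dec Bool.bool_dec s t) as [<-|E].
    + destruct b, b'; try congruence; eauto.
    + apply (HDj s t x); eauto.
  - intros s t c Hs Ht Hc. apply Hav, avoidance_requests_spec. auto.
  - intros s x y Hs _ Hx Hy. apply (Hdiam s); auto.
  - intros s b x Hs Hx. apply (Hch s b x Hs), Hsub; simpl; auto.
Qed.

Definition next_level m (FV : {F | admissible m F}) :
  {F | admissible (S m) F /\ children_below m F (proj1_sig FV)} :=
  constructive_indefinite_description _ (admissible_next m _ (proj2_sig FV)).

Fixpoint level (n : nat) : {F | admissible n F} :=
  match n with
  | O => exist _ (fun _ => (k0, 1)) admissible_zero
  | S m => exist _ (proj1_sig (next_level m (level m))) (proj1 (proj2_sig (next_level m (level m))))
  end.

Definition level_piece (s : list bool) : X -> Prop := piece K (proj1_sig (level (length s)) s).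

Lemma level_piece_closed s : m_closed d (level_piece s).
Proof. apply piece_closed, HKc. Qed.

Lemma level_piece_nonempty s : exists x, level_piece s x.
Proof.
  destruct (proj1 (proj2_sig (level (length s))) s eq_refl) as [A B].
  exists (fst (proj1_sig (level (length s)) s)). apply piece_center; auto; lra.
Qed.

Lemma level_piece_decr s b x : level_piece (b :: s) x -> level_piece s x.
Proof. apply (proj2 (proj2_sig (next_level (length s) (level (length s))))); auto. Qed.

Lemma level_piece_disj s x : level_piece (true :: s) x -> level_piece (false :: s) x -> False.
Proof.
  unfold level_piece. simpl length. intros A B.
  apply (proj1 (proj2 (proj2_sig (level (S (length s))))) (true :: s) (false :: s) x);
    auto; congruence.
Qed.

Lemma level_piece_diam s b x y : level_piece (b :: s) x -> level_piece (b :: s) y ->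
  d x y <= 2 / (INR (length s) + 1).
Proof.
  unfold level_piece. simpl length. intros A B. rewrite <- S_INR.
  apply (proj2 (proj2 (proj2 (proj2_sig (level (S (length s)))))) (b :: s)); auto; lia.
Qed.

Definition independent_cantor (k : nat) : X -> Prop :=
  scheme_limit level_piece (false :: repeat true k).

Lemma independent_cantor_family : exists C : nat -> X -> Prop,
  (forall k, cantor_like (C k)) /\ (forall k x, C k x -> K x) /\
  (forall k j x, C k x -> C j x -> k = j) /\
  (forall k j z w c, C k z -> C j w -> (1 <= c)%nat -> z <> Nat.iter c f w).
Proof.
  pose proof level_piece_decr as Hdecr. pose proof level_piece_disj as Hdisj.
  exists independent_cantor. split; [|split; [|split]].
  - intros k. apply (scheme_limit_cantor_like level_piece level_piece_closed
      level_piece_nonempty Hdecr Hdisj level_piece_diam).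
  - intros k x [[H _] _]. exact H.
  - intros k j x [Hk _] [Hj _].
    destruct (Nat.lt_total k j) as [L|[E|L]]; auto; exfalso;
      eapply (scheme_comb_disjoint level_piece); eauto.
  - intros k j z w c [_ Hz] [_ Hw] Hc.
    destruct (Hz c) as [s [Hs Ps]]. destruct (Hw c) as [t [Ht Pt]].
    unfold level_piece in Ps, Pt. rewrite Hs in Ps. rewrite Ht in Pt.
    apply (proj1 (proj2 (proj2 (proj2_sig (level c)))) s t c); auto.
Qed.

End IndependentFamily.

(* D is the limit of
   a Cantor scheme of closed sets A s, each "matched" with a ball piece of M having the same
   g-image; sibling pieces of M are disjoint, which makes g injective on D. *)
Section Lift.
Variable M : X -> Prop.
Hypothesis HM : cantor_like M.
Variable n : nat.
Local Notation g := (Nat.iter n f).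
Hypothesis Hginj : forall x y, M x -> M y -> g x = g y -> x = y.
Variable xU : X.
Variable rU : R.
Hypothesis HrU : 0 < rU.
Hypothesis HcovM : forall x, M x -> exists y, d xU y < rU / 2 /\ g y = g x.

Lemma lift_M_closed : m_closed d M. Proof. apply HM. Qed.

Lemma lift_M_perfect : perfect_set d M. Proof. split; [apply lift_M_closed|apply HM]. Qed.

Definition pullback (Q : X -> Prop) (y : X) : Prop := exists x, Q x /\ g y = g x.

Lemma pullback_closed Q : m_closed d Q -> m_closed d (pullback Q).
Proof.
  intros HQ. apply closed_ext with (fun y => (fun z => exists x, Q x /\ z = g x) (g y)).
  - intros y; split; intros [x [A B]]; exists x; split; auto.
  - pose proof (iter_continuous f n Hf) as Hg.
    exact (continuous_preimage_closed g _ Hg (continuous_image_closed g _ Hg HQ)).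
Qed.

Definition matched (A : X -> Prop) (p : X * R) : Prop :=
  M (fst p) /\ 0 < snd p /\ m_closed d A /\
  (forall y, A y -> pullback (piece M p) y) /\
  (forall x, piece M p x -> exists y, A y /\ g y = g x).

(* A matched pair can be shrunk so that the closed set has diameter at most eps: cover A by
   finitely many small balls and use Baire's argument on the corresponding cover of M. *)
Lemma matched_shrink A p eps : matched A p -> 0 < eps -> exists A' p', matched A' p' /\
  (forall y, A' y -> A y) /\ (forall x, piece M p' x -> piece M p x) /\
  (forall x y, A' x -> A' y -> d x y <= eps).
Proof.
  intros [Mc [Hr [HA [G1 G2]]]] Heps.
  destruct (finite_ball_cover (eps / 2)) as [l Hl]; [lra|].
  set (F := fun q x => piece M p x /\ pullback (fun y => A y /\ d q y <= eps / 2) x).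
  assert (HF : forall q, m_closed d (F q)).
  { intros q. apply closed_and; [apply piece_closed, lift_M_closed|].
    apply pullback_closed, closed_and; auto. apply closed_ball. }
  destruct (finite_closed_cover_piece M X l F HF (fst p) (snd p) Mc Hr)
    as [q [c' [r' [Hq [Mc' [Hr' G]]]]]].
  { intros x Mx Dx. assert (Px : piece M p x) by (split; auto; lra).
    destruct (G2 x Px) as [y [Ay Ey]]. destruct (Hl y) as [q [Hq Dq]].
    exists q; split; auto. split; auto. exists y; repeat split; auto; lra. }
  exists (fun y => (A y /\ d q y <= eps / 2) /\ pullback (piece M (c', r')) y), (c', r').
  split; [split; [|split; [|split; [|split]]]|split; [|split]]; simpl; auto.
  - apply closed_and; [apply closed_and; auto; apply closed_ball|].
    apply pullback_closed, piece_closed, lift_M_closed.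
  - intros y [_ H]; exact H.
  - intros x [Mx Dx]. destruct (G x Mx Dx) as [[_ [y [[Ay Dy] Ey]]] _].
    exists y; repeat split; auto. exists x; split; auto. split; auto.
  - intros y [[Ay _] _]; auto.
  - intros x [Mx Dx]. destruct (G x Mx Dx) as [_ Dc]. split; auto. simpl. lra.
  - intros x y [[_ Dx] _] [[_ Dy] _]. pose proof (d_tri_mid x q y). lra.
Qed.

(* A matched pair splits into two matched pairs with small closed sets and disjoint
   pieces of M, obtained by shrinking around two distinct points of M. *)
Lemma matched_split A p eps : matched A p -> 0 < eps -> exists A0 p0 A1 p1,
  matched A0 p0 /\ matched A1 p1 /\ (forall y, A0 y -> A y) /\ (forall y, A1 y -> A y) /\
  (forall x, piece M p0 x -> piece M p x) /\ (forall x, piece M p1 x -> piece M p x) /\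
  (forall x y, A0 x -> A0 y -> d x y <= eps) /\ (forall x y, A1 x -> A1 y -> d x y <= eps) /\
  (forall x, piece M p0 x -> piece M p1 x -> False).
Proof.
  intros Hg Heps. destruct Hg as [Mc [Hr [HA [G1 G2]]]].
  destruct p as [c r]; simpl in *.
  destruct (perfect_near M c r c lift_M_perfect Mc Hr) as [c' [Mc' [Dc' Nc']]].
  pose proof (d_pos _ _ Nc') as Hcc. rewrite d_sym in Hcc.
  set (rho := Rmin (r / 2) (d c c' / 3)).
  assert (R1 : 0 < rho) by (apply Rmin_pos; lra).
  assert (R2 : rho <= r / 2) by apply Rmin_l. assert (R3 : rho <= d c c' / 3) by apply Rmin_r.
  assert (Hpiece : forall z, M z -> d c z <= r / 2 ->
    matched (fun y => A y /\ pullback (piece M (z, rho)) y) (z, rho)).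
  { intros z Mz Dz. split; [|split; [|split; [|split]]]; simpl; auto.
    - apply closed_and; auto. apply pullback_closed, piece_closed, lift_M_closed.
    - intros y [_ H]; exact H.
    - intros x Px. assert (Hx : piece M (c, r) x) by (apply (piece_sub M (c, r) (z, rho)); auto).
      destruct (G2 x Hx) as [y [Ay Ey]]. exists y; repeat split; auto. exists x; auto. }
  assert (Dcc : d c c <= r / 2) by (rewrite d_self; lra).
  destruct (matched_shrink _ _ eps (Hpiece c Mc Dcc) Heps) as [A0 [p0 [Gd0 [S0 [T0 U0]]]]].
  destruct (matched_shrink _ _ eps (Hpiece c' Mc' Dc') Heps) as [A1 [p1 [Gd1 [S1 [T1 U1]]]]].
  exists A0, p0, A1, p1. repeat (split; [assumption|]).
  split; [intros y Hy; exact (proj1 (S0 y Hy))|].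
  split; [intros y Hy; exact (proj1 (S1 y Hy))|].
  split; [intros x Hx; apply (piece_sub M (c, r) (c, rho)); auto|].
  split; [intros x Hx; apply (piece_sub M (c, r) (c', rho)); auto|].
  split; [auto|split; [auto|]].
  intros x Hx0 Hx1. destruct (T0 x Hx0) as [_ H0]. destruct (T1 x Hx1) as [_ H1]. simpl in *.
  pose proof (d_tri c x c'). rewrite (d_sym x c') in H. lra.
Qed.

Definition lift_state : Type := ((X -> Prop) * (X * R))%type.

Definition matched_state (st : lift_state) : Prop := matched (fst st) (snd st).

Definition splits_into (m : nat) (st : lift_state) (children : lift_state * lift_state) : Prop :=
  let (st0, st1) := children in
  matched_state st0 /\ matched_state st1 /\
  (forall y, fst st0 y -> fst st y) /\ (forall y, fst st1 y -> fst st y) /\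
  (forall x, piece M (snd st0) x -> piece M (snd st) x) /\
  (forall x, piece M (snd st1) x -> piece M (snd st) x) /\
  (forall x y, fst st0 x -> fst st0 y -> d x y <= 2 / (INR m + 1)) /\
  (forall x y, fst st1 x -> fst st1 y -> d x y <= 2 / (INR m + 1)) /\
  (forall x, piece M (snd st0) x -> piece M (snd st1) x -> False).

Lemma splits_into_exists m st : matched_state st -> exists children, splits_into m st children.
Proof.
  destruct st as [A p]. intros Hg.
  assert (He : 0 < 2 / (INR m + 1)) by (pose proof (pos_INR m); apply Rdiv_lt_0_compat; lra).
  destruct (matched_split A p _ Hg He) as [A0 [p0 [A1 [p1 H]]]].
  exists ((A0, p0), (A1, p1)). exact H.
Qed.

Definition split_state m (sv : {st | matched_state st}) :
  {children | splits_into m (proj1_sig sv) children} :=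
  constructive_indefinite_description _ (splits_into_exists m _ (proj2_sig sv)).

Definition child_state (b : bool) m (sv : {st | matched_state st}) : {st | matched_state st} :=
  let (children, H) := split_state m sv in
  match children return splits_into m (proj1_sig sv) children -> {st | matched_state st} with
  | (st0, st1) => fun H => if b then exist _ st0 (proj1 H) else exist _ st1 (proj1 (proj2 H))
  end H.

Lemma root_matched : exists st, matched_state st /\ forall y, fst st y -> d xU y <= rU / 2.
Proof.
  destruct HM as [[m0 Hm0] _].
  exists (fun y => d xU y <= rU / 2 /\ pullback (piece M (m0, 1)) y, (m0, 1)).
  split; [split; [|split; [|split; [|split]]]|]; simpl; auto; try lra.
  - apply closed_and; [apply closed_ball|apply pullback_closed, piece_closed, lift_M_closed].
  - intros y [_ H]; exact H.
  - intros x Px. destruct (HcovM x (proj1 Px)) as [y [Dy Ey]].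
    exists y; repeat split; auto; [lra|]. exists x; auto.
  - intros y [H _]; exact H.
Qed.

Definition root_state : {st | matched_state st} :=
  let H := constructive_indefinite_description _ root_matched in
  exist _ (proj1_sig H) (proj1 (proj2_sig H)).

Fixpoint lift_tree (s : list bool) : {st | matched_state st} :=
  match s with
  | nil => root_state
  | b :: s' => child_state b (length s') (lift_tree s')
  end.

Definition lift_set (s : list bool) : X -> Prop := fst (proj1_sig (lift_tree s)).
Definition lift_piece (s : list bool) : X -> Prop := piece M (snd (proj1_sig (lift_tree s))).

Lemma lift_tree_splits s : splits_into (length s) (proj1_sig (lift_tree s))
  (proj1_sig (lift_tree (true :: s)), proj1_sig (lift_tree (false :: s))).
Proof.
  simpl. unfold child_state. destruct (split_state (length s) (lift_tree s)) as [[st0 st1] H].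
  exact H.
Qed.

Lemma lift_set_decr s b x : lift_set (b :: s) x -> lift_set s x.
Proof.
  unfold lift_set. pose proof (lift_tree_splits s) as [_ [_ [A [B _]]]]. destruct b; auto.
Qed.

Lemma lift_piece_decr s b x : lift_piece (b :: s) x -> lift_piece s x.
Proof.
  unfold lift_piece. pose proof (lift_tree_splits s) as [_ [_ [_ [_ [A [B _]]]]]].
  destruct b; auto.
Qed.

Lemma lift_piece_disj s x : lift_piece (true :: s) x -> lift_piece (false :: s) x -> False.
Proof.
  unfold lift_piece. pose proof (lift_tree_splits s) as [_ [_ [_ [_ [_ [_ [_ [_ A]]]]]]]]. eauto.
Qed.

Lemma lift_set_closed s : m_closed d (lift_set s).
Proof. apply (proj2_sig (lift_tree s)). Qed.

Lemma lift_set_matched s y : lift_set s y -> exists x, lift_piece s x /\ g y = g x.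
Proof. apply (proj2_sig (lift_tree s)). Qed.

Lemma lift_set_nonempty s : exists y, lift_set s y.
Proof.
  destruct (proj2_sig (lift_tree s)) as [Mc [Hr [_ [_ G2]]]].
  destruct (G2 _ (piece_center M _ Mc ltac:(lra))) as [y [Hy _]]. exists y; auto.
Qed.

(* Since g is injective on M and sibling pieces are disjoint, sibling sets are disjoint. *)
Lemma lift_set_disj s y : lift_set (true :: s) y -> lift_set (false :: s) y -> False.
Proof.
  intros H1 H2. destruct (lift_set_matched _ _ H1) as [x1 [L1 E1]].
  destruct (lift_set_matched _ _ H2) as [x2 [L2 E2]].
  assert (x1 = x2) by (apply Hginj; [apply L1|apply L2|congruence]).
  subst. eapply lift_piece_disj; eauto.
Qed.

Lemma lift_set_diam s b x y : lift_set (b :: s) x -> lift_set (b :: s) y ->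
  d x y <= 2 / (INR (length s) + 1).
Proof.
  unfold lift_set. pose proof (lift_tree_splits s) as [_ [_ [_ [_ [_ [_ [A [B _]]]]]]]].
  destruct b; auto.
Qed.

Lemma lift_cantor : exists D, cantor_like D /\ (forall y, D y -> d xU y < rU) /\
  (forall x y, D x -> D y -> g x = g y -> x = y) /\ (forall y, D y -> exists z, M z /\ g y = g z).
Proof.
  exists (scheme_limit lift_set nil). split; [|split; [|split]].
  - apply (scheme_limit_cantor_like lift_set lift_set_closed lift_set_nonempty
      lift_set_decr lift_set_disj lift_set_diam).
  - intros y [Hy _]. apply Rle_lt_trans with (rU / 2); [|lra].
    exact (proj2 (proj2_sig (constructive_indefinite_description _ root_matched)) y Hy).
  - (* points of D in different pieces of a fine level have g-images in disjoint pieces of M *)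
    intros x y Hx Hy E. apply NNPP; intros Hne.
    destruct (small_radius _ (d_pos _ _ Hne)) as [N HN].
    destruct (proj2 Hx (S N)) as [t1 [L1 P1]]. destruct (proj2 Hy (S N)) as [t2 [L2 P2]].
    destruct (list_eq_dec Bool.bool_dec t1 t2) as [<-|Et].
    + destruct t1 as [|b t]; simpl in L1; try discriminate. injection L1 as L1.
      pose proof (lift_set_diam t b x y P1 P2). rewrite L1 in H. lra.
    + destruct (lift_set_matched _ _ P1) as [x0 [Q1 F1]].
      destruct (lift_set_matched _ _ P2) as [y0 [Q2 F2]].
      assert (x0 = y0) by (apply Hginj; [apply Q1|apply Q2|congruence]). subst.
      apply (scheme_level_disj lift_piece lift_piece_decr lift_piece_disj t1 t2 y0); auto.
      congruence.
  - intros y [Hy _]. destruct (lift_set_matched _ _ Hy) as [x [Lx Ex]].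
    exists x; split; auto. apply Lx.
Qed.

End Lift.

(* The invariant set T = union over k of the forward orbit of D k, where each D k is a Cantor
   set some iterate f^(nD k) of which maps injectively into C k.  Orbits of points of T
   eventually coincide with orbits of points of the scrambled set, and the independence of
   the C k makes f injective on T; this transfers all the scrambling properties to T. *)
Section OrbitUnion.
Variable Sc K : X -> Prop.
Hypothesis HS : synd_scrambled d f Sc.
Hypothesis HfS : forall x, Sc x -> Sc (f x).
Hypothesis HKS : forall x, K x -> Sc x.
Variable C : nat -> X -> Prop.
Hypothesis C_in_K : forall k x, C k x -> K x.
Hypothesis C_disjoint : forall k j x, C k x -> C j x -> k = j.
Hypothesis C_avoid : forall k j z w c, C k z -> C j w -> (1 <= c)%nat -> z <> Nat.iter c f w.
Variable D : nat -> X -> Prop.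
Variable nD : nat -> nat.
Hypothesis D_cantor : forall k, cantor_like (D k).
Hypothesis D_inj : forall k x y, D k x -> D k y ->
  Nat.iter (nD k) f x = Nat.iter (nD k) f y -> x = y.
Hypothesis D_lands : forall k y, D k y -> exists z, C k z /\ Nat.iter (nD k) f y = Nat.iter (nD k) f z.

Definition orbit_union (x : X) : Prop := exists k a y, D k y /\ x = Nat.iter a f y.

Lemma orbit_union_invariant x : orbit_union x -> orbit_union (f x).
Proof. intros [k [a [y [Dy ->]]]]. exists k, (S a), y. auto. Qed.

Lemma C_scrambled k a z : C k z -> Sc (Nat.iter a f z).
Proof. intros H. apply scrambled_iter; eauto. Qed.

Lemma orbit_union_tail x : orbit_union x -> exists k a y z, D k y /\ x = Nat.iter a f y /\
  C k z /\ Nat.iter (nD k) f y = Nat.iter (nD k) f z /\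
  forall N, (nD k <= N)%nat -> Nat.iter N f x = Nat.iter N f (Nat.iter a f z).
Proof.
  intros [k [a [y [Dy ->]]]]. destruct (D_lands k y Dy) as [z [Cz Ez]].
  exists k, a, y, z. repeat split; auto. intros N HN. rewrite !iter_comp.
  replace (N + a)%nat with ((N + a - nD k) + nD k)%nat by lia. rewrite <- !iter_comp, Ez. auto.
Qed.

Lemma C_orbits_meet k j a b z w : C k z -> C j w ->
  Nat.iter a f z = Nat.iter b f w -> a = b /\ z = w /\ k = j.
Proof.
  (* if a < b, injectivity of f^a on Sc gives z = f^(b-a) w *)
  assert (Hlt : forall k j a b z w, C k z -> C j w -> (a < b)%nat ->
            Nat.iter a f z = Nat.iter b f w -> False).
  { intros k' j' a' b' z' w' Hz Hw Hab E.
    replace b' with (a' + (b' - a'))%nat in E by lia. rewrite Nat.iter_add in E.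
    apply (scrambled_iter_inj Sc HS HfS a') in E; eauto using C_scrambled.
    apply (C_avoid k' j' z' w' (b' - a')%nat); auto; lia. }
  intros Hz Hw E. destruct (Nat.lt_total a b) as [L|[<-|L]].
  - exfalso; eauto.
  - apply (scrambled_iter_inj Sc HS HfS a) in E; eauto. subst w. eauto.
  - exfalso; eauto.
Qed.

Lemma orbit_union_f_inj u v : orbit_union u -> orbit_union v -> f u = f v -> u = v.
Proof.
  intros Hu Hv E1.
  destruct (orbit_union_tail u Hu) as [k [a [y [z [Dy [-> [Cz [Gy Tu]]]]]]]].
  destruct (orbit_union_tail v Hv) as [j [b [y' [w [Dy' [-> [Cw [Gy' Tv]]]]]]]].
  set (N := S (Nat.max (nD k) (nD j))).
  assert (E2 : Nat.iter a f z = Nat.iter b f w).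
  { apply (scrambled_iter_inj Sc HS HfS N); eauto using C_scrambled.
    rewrite <- Tu, <- Tv by (unfold N; lia). unfold N. rewrite !Nat.iter_succ_r, E1. auto. }
  destruct (C_orbits_meet k j a b z w Cz Cw E2) as [<- [<- <-]].
  f_equal. apply (D_inj k); auto. congruence.
Qed.

Lemma orbit_union_iter_inj N u v : orbit_union u -> orbit_union v ->
  Nat.iter N f u = Nat.iter N f v -> u = v.
Proof.
  revert u v. induction N as [|N IH]; simpl; auto. intros u v Hu Hv E.
  apply orbit_union_f_inj; auto. apply IH; try (apply orbit_union_invariant; auto).
  rewrite <- !Nat.iter_succ_r. auto.
Qed.

Lemma orbit_union_follows u v : orbit_union u -> orbit_union v -> u <> v ->
  exists su sv N0, Sc su /\ Sc sv /\ su <> sv /\ forall N, (N0 <= N)%nat ->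
    Nat.iter N f u = Nat.iter N f su /\ Nat.iter N f v = Nat.iter N f sv.
Proof.
  intros Hu Hv Hne.
  destruct (orbit_union_tail u Hu) as [k [a [y [z [_ [_ [Cz [_ Tu]]]]]]]].
  destruct (orbit_union_tail v Hv) as [j [b [y' [w [_ [_ [Cw [_ Tv]]]]]]]].
  exists (Nat.iter a f z), (Nat.iter b f w), (Nat.max (nD k) (nD j)).
  split; [|split; [|split]]; eauto using C_scrambled.
  - intro E. apply Hne. apply (orbit_union_iter_inj (Nat.max (nD k) (nD j))); auto.
    rewrite Tu, Tv by lia. rewrite E; auto.
  - intros N HN. split; [apply Tu|apply Tv]; lia.
Qed.

Lemma orbit_union_scrambled : synd_scrambled d f orbit_union.
Proof.
  split.
  - destruct (D_cantor 0%nat) as [[y Hy] [_ [Hp _]]].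
    destruct (Hp y Hy 1 ltac:(lra)) as [y' [Hy' [Hne _]]].
    exists y, y'. repeat split; auto; exists 0%nat, 0%nat; eauto.
  - intros u v Hu Hv Hne. destruct (orbit_union_follows u v Hu Hv Hne)
      as [su [sv [N0 [S1 [S2 [S3 H]]]]]].
    destruct (proj2 HS su sv S1 S2 S3) as [P1 P2].
    destruct (eventually_equal_orbits u v su sv N0 H) as [Q1 [Q2 _]]. auto.
Qed.

Lemma orbit_union_eps_scrambled eps :
  synd_eps_scrambled d f eps Sc -> synd_eps_scrambled d f eps orbit_union.
Proof.
  intros [_ Hlim]. split; [apply orbit_union_scrambled|].
  intros u v Hu Hv Hne. destruct (orbit_union_follows u v Hu Hv Hne)
    as [su [sv [N0 [S1 [S2 [S3 H]]]]]].
  apply (eventually_equal_orbits u v su sv N0 H). auto.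
Qed.

Lemma orbit_union_mycielski : mycielski_set d orbit_union.
Proof.
  exists (fun j x => exists y, D (fst (Cantor.of_nat j)) y /\ x = Nat.iter (snd (Cantor.of_nat j)) f y).
  split.
  - intros j. apply cantor_like_cantor, cantor_like_image; auto; [apply iter_continuous; auto|].
    intros x y Hx Hy. apply orbit_union_iter_inj; exists (fst (Cantor.of_nat j)), 0%nat; eauto.
  - intros x; split.
    + intros [k [a [y [Dy E]]]]. exists (Cantor.to_nat (k, a)).
      rewrite Cantor.cancel_of_to. eauto.
    + intros [j [y [Dy E]]]. exists (fst (Cantor.of_nat j)), (snd (Cantor.of_nat j)), y; auto.
Qed.

Lemma orbit_union_dense :
  (forall U, m_open d U -> (exists x, U x) -> exists k, forall y, D k y -> U y) ->
  m_dense d orbit_union.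
Proof.
  intros HDU U HU HUne. destruct (HDU U HU HUne) as [k Hk].
  destruct (D_cantor k) as [[y Hy] _]. exists y. split; auto. exists k, 0%nat, y; auto.
Qed.

End OrbitUnion.

(* The hypothesis of the theorem lets us lift each C k into any prescribed ball; doing so
   along a countable base of balls gives Cantor sets D k meeting every nonempty open set. *)
Section LiftedFamily.
Variable Sc K : X -> Prop.
Hypothesis HS : synd_scrambled d f Sc.
Hypothesis HfS : forall x, Sc x -> Sc (f x).
Hypothesis HKS : forall x, K x -> Sc x.
Hypothesis Hcov : forall U : X -> Prop, m_open d U -> (exists x, U x) ->
  exists n : nat, forall x, K x -> exists y, U y /\ Nat.iter n f y = Nat.iter n f x.
Variable C : nat -> X -> Prop.
Hypothesis C_cantor : forall k, cantor_like (C k).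
Hypothesis C_in_K : forall k x, C k x -> K x.

Lemma lifted_into_ball k c r : 0 < r -> exists nDk : nat * (X -> Prop),
  cantor_like (snd nDk) /\ (forall y, snd nDk y -> d c y < r) /\
  (forall x y, snd nDk x -> snd nDk y ->
     Nat.iter (fst nDk) f x = Nat.iter (fst nDk) f y -> x = y) /\
  (forall y, snd nDk y -> exists z, C k z /\ Nat.iter (fst nDk) f y = Nat.iter (fst nDk) f z).
Proof.
  intros Hr. destruct (Hcov (fun y => d c y < r / 2)) as [n Hn].
  - apply open_ball.
  - exists c. rewrite d_self. lra.
  - destruct (lift_cantor (C k) (C_cantor k) n) with (xU := c) (rU := r) as [Dk HDk]; auto.
    + intros x y Hx Hy. apply (scrambled_iter_inj Sc HS HfS n); eauto.
    + intros x Hx. apply Hn; eauto.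
    + exists (n, Dk). exact HDk.
Qed.

Lemma lifted_family : exists (D : nat -> X -> Prop) (nD : nat -> nat),
  (forall k, cantor_like (D k)) /\
  (forall k x y, D k x -> D k y -> Nat.iter (nD k) f x = Nat.iter (nD k) f y -> x = y) /\
  (forall k y, D k y -> exists z, C k z /\ Nat.iter (nD k) f y = Nat.iter (nD k) f z) /\
  (forall U, m_open d U -> (exists x, U x) -> exists k, forall y, D k y -> U y).
Proof.
  destruct (C_cantor 0%nat) as [[x0 _] _].
  destruct (countable_ball_base x0) as [c [r [Hr Hbase]]].
  pose (pick := fun k => constructive_indefinite_description _ (lifted_into_ball k (c k) (r k) (Hr k))).
  exists (fun k => snd (proj1_sig (pick k))), (fun k => fst (proj1_sig (pick k))).
  split; [|split; [|split]]; try (intros k; apply (proj2_sig (pick k))).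
  intros U HU HUne. destruct (Hbase U HU HUne) as [k Hk].
  exists k. intros y Hy. apply Hk, (proj2_sig (pick k)), Hy.
Qed.

End LiftedFamily.
End Dynamics.
End CompactDynamics.

Theorem lemma3p11 (X : Type) (d : X -> X -> R) (f : X -> X)
  (Hd : is_metric d) (Hcpt : compact_space d) (Hf : continuous_map d f)
  (S K : X -> Prop)
  (HS : synd_scrambled d f S) (HfS : forall x, S x -> S (f x))
  (HKS : forall x, K x -> S x) (HK : cantor_set d K)
  (Hcov : forall U : X -> Prop, m_open d U -> (exists x, U x) ->
     exists n : nat, forall x, K x -> exists y, U y /\ Nat.iter n f y = Nat.iter n f x) :
  exists T : X -> Prop,
    m_dense d T /\ mycielski_set d T /\ (forall x, T x -> T (f x)) /\
    synd_scrambled d f T /\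
    (forall eps, 0 < eps -> synd_eps_scrambled d f eps S -> synd_eps_scrambled d f eps T).
Proof.
  destruct HK as [[k0 Hk0] [HKcpt [HKp _]]].
  pose proof (compact_closed Hd K HKcpt) as HKc.
  destruct (independent_cantor_family Hd Hcpt f Hf S K HS HfS HKS HKc HKp k0 Hk0)
    as [C [C_cantor [C_in_K [C_disjoint C_avoid]]]].
  destruct (lifted_family Hd Hcpt f Hf S K HS HfS HKS Hcov C C_cantor C_in_K)
    as [D [nD [D_cantor [D_inj [D_lands D_dense]]]]].
  exists (orbit_union f D). split; [|split; [|split; [|split]]].
  - apply orbit_union_dense; auto.
  - eapply orbit_union_mycielski; eauto.
  - apply orbit_union_invariant.
  - eapply orbit_union_scrambled; eauto.
  - intros eps _. eapply orbit_union_eps_scrambled; eauto.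
Qed.
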